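(* Let $X$ be a real random variable with $X\ge 1.5$ almost surely. Assume $X$ has finite variance and is not almost surely constant. Let $\tau\in(0,1]$ and $c\in\mathbb R$ be constants. Then $$\operatorname{Var}\Big(\sqrt{\big(X+\tfrac{\tau}{1+e^{X}}\big)^2+c^2}\Big)<\operatorname{Var}\Big(\sqrt{X^2+c^2}\Big).$$ *)

From HB Require Import structures.
From mathcomp Require Import all_boot all_order all_algebra.
From mathcomp Require Import all_classical all_reals all_analysis.

From HB Require Import structures.
From mathcomp Require Import all_boot all_order all_algebra.
From mathcomp Require Import all_classical all_reals all_analysis.
From mathcomp Require Import measurable_realfun.
From mathcomp Require Import ring lra.
Import Order.TTheory GRing.Theory Num.Theory.
Import numFieldNormedType.Exports.
Local Open Scope ring_scope.

(* Write g(x) = sqrt (x^2 + c^2) (hypot c) and f(x) = g(x + tau / (1 + e^x))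
   (shifted_hypot tau c); the claim is Var f(X) < Var g(X) for X >= 3/2.

   The proof is a comparison of mean squared deviations.
   1. Pointwise (section shift_and_hypot): on [3/2, +oo), f is a strict
      contraction relative to g, i.e. |f u - f v| < |g u - g v| for u <> v.
      This rests on three properties of the shift d(x) = tau / (1 + e^x):
      it is decreasing, 1-Lipschitz for tau <= 1, and x d(x) is decreasing.
   2. Probabilistic (section variance_comparison): if F deviates from some
      point b no more than G deviates from its mean, and not almost surely
      equally, then Var F < Var G; this uses that the variance minimises the
      mean squared deviation, and that a.s. comparable integrable functions
      with equal expectations are a.s. equal.
   3. The mean of g(X) is a value g(mu) with mu >= 3/2, so taking
      b = f(mu) in step 2 and applying step 1 to (X x, mu) gives the theorem;
      equality a.s. would force X = mu a.s., which is excluded. *)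

Section shift_and_hypot.
Context {R : realType}.

Definition shift (tau x : R) := tau / (1 + expR x).

Definition hypot (c x : R) := Num.sqrt (x ^+ 2 + c ^+ 2).

Lemma shift_gt0 tau x : 0 < tau -> 0 < shift tau x.
Proof. by move=> t0; rewrite /shift divr_gt0 // addr_gt0 // expR_gt0. Qed.

Lemma shift_le tau x : 0 < tau -> shift tau x <= tau.
Proof.
move=> t0; rewrite /shift ler_pdivrMr ?addr_gt0 ?expR_gt0 //.
by have := expR_gt0 x; nra.
Qed.

Lemma shift_decr tau x y : 0 < tau -> y < x -> shift tau x < shift tau y.
Proof.
move=> t0 yx; rewrite /shift ltr_pM2l // ltf_pV2 ?posrE ?addr_gt0 ?expR_gt0 //.
by rewrite ltrD2l ltr_expR.
Qed.

Lemma shift_contract tau x y : 0 < tau <= 1 -> y < x ->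
  shift tau y - shift tau x < x - y.
Proof.
move=> /andP[t0 t1] yx.
have ex := expR_gt0 x; have ey := expR_gt0 y.
have eyx : expR y < expR x by rewrite ltr_expR.
have -> : shift tau y - shift tau x =
    tau * (expR x - expR y) / ((1 + expR x) * (1 + expR y)).
  by rewrite /shift; field; rewrite !lt0r_neq0 ?addr_gt0.
rewrite ltr_pdivrMr ?mulr_gt0 ?addr_gt0 //.
(* e^x - e^y = e^x (1 - e^(y-x)) <= e^x (x - y) *)
have e_yx : expR x * (1 + (y - x)) <= expR y.
  have -> : expR y = expR x * expR (y - x) by rewrite -expRD addrC subrK.
  by rewrite ler_pM2l // expR_ge1Dx.
have tau_le : tau * (expR x - expR y) <= expR x - expR y.
  by rewrite ler_piMl //; lra.
have pos : 0 < (x - y) * (1 + expR y + expR x * expR y).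
  by rewrite mulr_gt0 ?subr_gt0 // !addr_gt0 ?mulr_gt0.
nra.
Qed.

Lemma div1DexpR_decr (x y : R) : 3/2 <= y -> y < x ->
  x / (1 + expR x) < y / (1 + expR y).
Proof.
move=> hy yx.
have ey := expR_ge1Dx y; have ep := expR_gt0 y.
rewrite ltr_pdivrMr ?addr_gt0 ?expR_gt0 // mulrAC.
rewrite ltr_pdivlMr ?addr_gt0 ?expR_gt0 //.
have -> : expR x = expR y * expR (x - y) by rewrite -expRD addrC subrK.
have exy := expR_ge1Dx (x - y).
have h1 : y * expR y * (1 + (x - y)) <= y * expR y * expR (x - y).
  by rewrite ler_pM2l ?mulr_gt0 //; lra.
have h2 : 0 <= (expR y - (1 + y)) * (y - 1) by apply: mulr_ge0; lra.
have h3 : 0 < (x - y) * (expR y * (y - 1) - 1) by apply: mulr_gt0; nra.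
nra.
Qed.

Lemma mul_shift_decr tau x y : 0 < tau -> 3/2 <= y -> y < x ->
  x * shift tau x < y * shift tau y.
Proof.
move=> t0 hy yx; rewrite /shift !mulrA ![_ * tau]mulrC -!mulrA ltr_pM2l //.
exact: div1DexpR_decr.
Qed.

Lemma hypot_ge0 c x : 0 <= hypot c x.
Proof. exact: sqrtr_ge0. Qed.

Lemma sqr_hypot c x : hypot c x ^+ 2 = x ^+ 2 + c ^+ 2.
Proof. by rewrite /hypot sqr_sqrtr // addr_ge0 // sqr_ge0. Qed.

Lemma hypot_lt c x y : 0 <= y -> y < x -> hypot c y < hypot c x.
Proof.
move=> y0 yx; rewrite /hypot ltr_sqrt; last by have := sqr_ge0 c; nra.
by rewrite ltrD2r; nra.
Qed.

Lemma hypot_le c x y : 0 <= y -> y <= x -> hypot c y <= hypot c x.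
Proof.
move=> y0; rewrite le_eqVlt => /orP[/eqP-> //|yx]; exact/ltW/hypot_lt.
Qed.

Lemma hypot_le_norm c x : hypot c x <= `|x| + `|c|.
Proof.
rewrite -ler_sqr ?nnegrE ?hypot_ge0 ?addr_ge0 // sqr_hypot.
rewrite -(real_normK (num_real x)) -[c ^+ 2](real_normK (num_real c)).
by have := normr_ge0 x; have := normr_ge0 c; nra.
Qed.

Lemma shift_continuous tau : continuous (shift tau).
Proof.
move=> x; apply: (@continuousM _ _ (cst tau) (fun u => (1 + expR u)^-1)).
  exact: cst_continuous.
apply: continuousV; first by rewrite lt0r_neq0 // addr_gt0 // expR_gt0.
by apply: continuousD; [exact: cst_continuous | exact: continuous_expR].
Qed.

Lemma hypot_continuous c : continuous (hypot c).
Proof.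
move=> x; apply: continuous_comp; last exact: sqrt_continuous.
by apply: continuousD; [exact: exprn_continuous | exact: cst_continuous].
Qed.

Lemma hypot_sqrt c m : `|c| <= m -> hypot c (Num.sqrt (m ^+ 2 - c ^+ 2)) = m.
Proof.
move=> cm; have m0 : 0 <= m := le_trans (normr_ge0 c) cm.
have : c ^+ 2 <= m ^+ 2 by rewrite -(real_normK (num_real c)) ler_sqr ?nnegrE.
rewrite -subr_ge0 => cm2.
by rewrite /hypot sqr_sqrtr // subrK sqrtr_sqr ger0_norm.
Qed.

Lemma hypot_sub_lt (c a b x y : R) : 0 <= y <= x -> x <= a -> y <= b ->
  a ^+ 2 - b ^+ 2 < x ^+ 2 - y ^+ 2 ->
  hypot c a - hypot c b < hypot c x - hypot c y.
Proof.
move=> /andP[y0 yx] xa yb sq.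
have := hypot_le c _ _ (le_trans y0 yx) xa; have := hypot_le c _ _ y0 yb.
have := hypot_le c _ _ y0 yx; have := hypot_ge0 c b; have := hypot_ge0 c y.
have := sqr_hypot c a; have := sqr_hypot c b.
have := sqr_hypot c x; have := sqr_hypot c y.
(* with A = hypot c a etc.: (A - B)(A + B) = a^2 - b^2 < x^2 - y^2
   = (X - Y)(X + Y) <= (X - Y)(A + B) *)
nra.
Qed.

Definition shifted_hypot (tau c x : R) := hypot c (x + shift tau x).

Lemma shifted_hypot_continuous tau c : continuous (shifted_hypot tau c).
Proof.
move=> z; apply: continuous_comp; last exact: hypot_continuous.
by apply: continuousD; [exact: cvg_id | exact: shift_continuous].
Qed.

Lemma shifted_hypot_le_norm tau c x : 0 < tau ->
  shifted_hypot tau c x <= `|x| + (tau + `|c|).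
Proof.
move=> t0; apply: le_trans (hypot_le_norm _ _) _.
have := ler_normD x (shift tau x); have := shift_le _ x t0.
by rewrite (ger0_norm (ltW (shift_gt0 _ x t0))); lra.
Qed.

Lemma shifted_hypot_contract (tau c x y : R) :
  0 < tau <= 1 -> 3/2 <= y -> y < x ->
  0 < shifted_hypot tau c x - shifted_hypot tau c y < hypot c x - hypot c y.
Proof.
move=> ht hy yx; have t0 : 0 < tau by case/andP: ht.
have dx := shift_gt0 _ x t0; have dy := shift_gt0 _ y t0.
have dxy := shift_decr _ _ _ t0 yx.
have ba : y + shift tau y < x + shift tau x.
  by have := shift_contract _ _ _ ht yx; lra.
rewrite subr_gt0 hypot_lt //=; last by lra.
apply: hypot_sub_lt; rewrite ?lerDl ?ltW //; first by lra.
have := mul_shift_decr _ _ _ t0 hy yx.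
have : shift tau x ^+ 2 < shift tau y ^+ 2 by rewrite ltr_pXn2r ?nnegrE ?ltW.
nra.
Qed.

Lemma shifted_hypot_sqr_contract (tau c u v : R) :
  0 < tau <= 1 -> 3/2 <= u -> 3/2 <= v ->
  let f := shifted_hypot tau c in
  (f u - f v) ^+ 2 <= (hypot c u - hypot c v) ^+ 2 /\
  ((f u - f v) ^+ 2 = (hypot c u - hypot c v) ^+ 2 -> u = v).
Proof.
move=> ht hu hv f.
have sqr_lt (a b p q : R) : 0 < b - a < q - p -> (a - b) ^+ 2 < (p - q) ^+ 2.
  by move=> /andP[h1 h2]; rewrite -sqrrN opprB -[(p - q) ^+ 2]sqrrN opprB
    ltr_pXn2r ?nnegrE //; lra.
have [-> | uv] := eqVneq u v; first by rewrite !subrr.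
suff lt : (f u - f v) ^+ 2 < (hypot c u - hypot c v) ^+ 2.
  by split; [exact: ltW | move=> e; move: lt; rewrite e ltxx].
have [ltuv | ltvu | equv] := ltgtP u v; last by rewrite equv eqxx in uv.
- exact/sqr_lt/shifted_hypot_contract.
- rewrite -sqrrN opprB -[X in _ < X]sqrrN opprB.
  exact/sqr_lt/shifted_hypot_contract.
Qed.

End shift_and_hypot.

Section variance_comparison.
Context {d} {T : measurableType d} {R : realType} (P : probability T R).

Lemma Lfun_measurable {f : T -> R} {p} : f \in Lfun P p -> measurable_fun setT f.
Proof. by move/sub_Lfun_mfun; rewrite inE. Qed.

Lemma Lfun2_comp {X : T -> R} {phi : R -> R} (k : R) :
  X \in Lfun P 2%:E -> continuous phi -> (forall z, `|phi z| <= `|z| + k) ->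
  phi \o X \in Lfun P 2%:E.
Proof.
move=> X2 phi_cont phi_growth.
have mphiX : measurable_fun setT (phi \o X).
  apply: measurableT_comp (Lfun_measurable X2).
  exact: continuous_measurable_fun.
have X2i := Lfun2_integrable_sqr X2.
rewrite inE; apply/andP; split; first by rewrite inE.
rewrite !inE /= /finite_norm unlock poweR_lty //.
under eq_integral => x _ do
  rewrite /= powR_mulrn ?real_normK ?num_real //.
apply: integrable_lty => //.
(* |phi (X x)|^2 <= (|X x| + k)^2 <= 2 X x ^ 2 + 2 k ^ 2 *)
apply: (@le_integrable _ _ _ _ _ measurableT _
  (EFin \o (fun x => 2 * X x ^+ 2 + 2 * k ^+ 2))).
- by apply/measurable_EFinP; apply: measurable_funX.
- move=> x _ /=; rewrite !lee_fin normrX.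
  rewrite [leRHS]ger0_norm; last by have := sqr_ge0 (X x); have := sqr_ge0 k; lra.
  have phi_sq : `|phi (X x)| ^+ 2 <= (`|X x| + k) ^+ 2.
    by rewrite lerXn2r ?nnegrE // (le_trans _ (phi_growth _)).
  rewrite -[X x ^+ 2](real_normK (num_real (X x))).
  by have := sqr_ge0 (`|X x| - k); nra.
- have -> : EFin \o (fun x => 2 * X x ^+ 2 + 2 * k ^+ 2) =
      ((fun x => 2%:E * (X x ^+ 2)%R%:E)
       \+ (fun x => 2%:E * (EFin \o cst (k ^+ 2)%R) x))%E.
    by apply/funext => x /=; rewrite EFinD !EFinM.
  apply: integrableD => //; apply: integrableZl => //.
  exact: finite_measure_integrable_cst.
Qed.

Lemma Lfun2_subr_cst {H : T -> R} (c : R) : H \in Lfun P 2%:E ->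
  H \- cst c \in Lfun P 2%:E.
Proof.
by move=> H2; apply: rpredB => //; [exact: lee1n | move=> ?; exact: Lfun_cst].
Qed.

Lemma variance_sqdev_mean {G : T -> R} {m : R} : ('E_P[G] = m%:E)%E ->
  variance P G = ('E_P[(G \- cst m) ^+ 2])%E.
Proof. by move=> EG; rewrite /variance unlock EG /= expr2. Qed.

Lemma variance_le_sqdev {F : T -> R} (b : R) : F \in Lfun P 2%:E ->
  (variance P F <= 'E_P[(F \- cst b) ^+ 2])%E.
Proof.
move=> F2.
have Fb2 := Lfun2_subr_cst b F2.
have Fb1 := Lfun_subset12 (fin_num_measure P _ measurableT) Fb2.
rewrite -(varianceB_cst_r b F2) (varianceE Fb2) leeBlDr.
  exact/leeDl/sqre_ge0.
by rewrite fin_numX ?expectation_fin_num.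
Qed.

Lemma expectation_eq_ae {A B : T -> R} : A \in Lfun P 1 -> B \in Lfun P 1 ->
  {ae P, forall x, A x <= B x} -> ('E_P[A] = 'E_P[B])%E ->
  {ae P, forall x, A x = B x}.
Proof.
move=> A1 B1 AB EAB.
have mBA : measurable_fun setT (fun x => (B x - A x)%:E).
  apply/measurable_EFinP; apply: measurable_funB.
  - exact: Lfun_measurable B1.
  - exact: Lfun_measurable A1.
have EBA : ('E_P[B \- A] = 0)%E.
  by rewrite expectationB // EAB subee // expectation_fin_num.
have int_abs0 : (\int[P]_x `|(B x - A x)%:E| = 0)%E.
  rewrite (ae_eq_integral (fun x => (B x - A x)%:E)) //.
  - by move: EBA; rewrite unlock.
  - exact: measurableT_comp.
  - by apply: filterS AB => x ABx _; rewrite /= ger0_norm // subr_ge0.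
apply: filterS ((ae_eq_integral_abs P measurableT mBA).1 int_abs0) => x /(_ I).
by move=> /= /eqP; rewrite eqe subr_eq0 => /eqP ->.
Qed.

Lemma variance_lt_of_sqdev {F G : T -> R} (b : R) {m : R} :
  F \in Lfun P 2%:E -> G \in Lfun P 2%:E -> ('E_P[G] = m%:E)%E ->
  {ae P, forall x, (F x - b) ^+ 2 <= (G x - m) ^+ 2} ->
  ~ {ae P, forall x, (F x - b) ^+ 2 = (G x - m) ^+ 2} ->
  (variance P F < variance P G)%E.
Proof.
move=> F2 G2 EG le_dev not_eq_dev.
have dev2 (H : T -> R) (c : R) :
    H \in Lfun P 2%:E -> (H \- cst c) ^+ 2 \in Lfun P 1.
  by move=> H2; rewrite expr2 Lfun2_mul_Lfun1 ?Lfun2_subr_cst.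
have devE (H : T -> R) (c : R) x : ((H \- cst c) ^+ 2) x = (H x - c) ^+ 2.
  by rewrite /= expr2.
rewrite (variance_sqdev_mean EG).
apply: (le_lt_trans (variance_le_sqdev b F2)).
rewrite lt_neqAle; apply/andP; split.
- apply/eqP => E_eq; apply: not_eq_dev.
  apply: filterS (expectation_eq_ae (dev2 _ b F2) (dev2 _ m G2) _ E_eq) => [x|].
    by rewrite !devE.
  by apply: filterS le_dev => x; rewrite !devE.
- apply: expectation_le.
  + exact: Lfun_measurable (dev2 _ b F2).
  + exact: Lfun_measurable (dev2 _ m G2).
  + by move=> x; rewrite devE sqr_ge0.
  + by move=> x; rewrite devE sqr_ge0.
  + by apply: filterS le_dev => x; rewrite !devE.
Qed.


Lemma hypot_mean_attained {X : T -> R} {c a : R} : 0 <= a ->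
  hypot c \o X \in Lfun P 1 -> {ae P, forall x, a <= X x} ->
  exists2 mu, a <= mu & ('E_P[hypot c \o X] = (hypot c mu)%:E)%E.
Proof.
move=> a0 G1 aX.
have Efin := expectation_fin_num G1.
set m := fine 'E_P[hypot c \o X].
have am : hypot c a <= m.
  rewrite -lee_fin /m fineK // -(expectation_cst P).
  apply: expectation_le => //; first exact: Lfun_measurable G1.
  - by move=> x; exact: hypot_ge0.
  - by move=> x; exact: hypot_ge0.
  - by apply: filterS aX => x; exact: hypot_le.
have cm : `|c| <= m.
  have -> : `|c| = hypot c 0 by rewrite /hypot expr0n add0r sqrtr_sqr.
  exact: le_trans (hypot_le _ _ _ _ a0) am.
exists (Num.sqrt (m ^+ 2 - c ^+ 2)); last by rewrite hypot_sqrt // /m fineK.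
rewrite leNgt; apply/negP => /(hypot_lt c _ _ (sqrtr_ge0 _)).
by rewrite hypot_sqrt // ltNge am.
Qed.

End variance_comparison.

Theorem lemma4 (R : realType) (d : measure_display) (T : measurableType d)
  (P : probability T R) (X : {RV P >-> R}) (tau c : R)
  (HX : {ae P, forall x, 3 / 2 <= X x})
  (Hvar : (X : T -> R) \in Lfun P 2%:E)
  (Hnc : ~ (exists a : R, {ae P, forall x, X x = a}))
  (Htau : 0 < tau <= 1) :
  (variance P (fun x => Num.sqrt ((X x + tau / (1 + expR (X x))) ^+ 2 + c ^+ 2))
   < variance P (fun x => Num.sqrt (X x ^+ 2 + c ^+ 2)))%E.
Proof.
have t0 : 0 < tau by case/andP: Htau.
change (variance P (shifted_hypot tau c \o X) < variance P (hypot c \o X))%E.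
have fX2 : shifted_hypot tau c \o X \in Lfun P 2%:E.
  apply: (Lfun2_comp P (tau + `|c|) Hvar (shifted_hypot_continuous tau c)) => z.
  by rewrite ger0_norm ?hypot_ge0 ?shifted_hypot_le_norm.
have gX2 : hypot c \o X \in Lfun P 2%:E.
  apply: (Lfun2_comp P `|c| Hvar (hypot_continuous c)) => z.
  by rewrite ger0_norm ?hypot_ge0 ?hypot_le_norm.
have gX1 := Lfun_subset12 (fin_num_measure P _ measurableT) gX2.
have [|mu mu_ge EgX] := hypot_mean_attained P _ gX1 HX; first by lra.
have contract u : 3/2 <= u -> _ :=
  fun hu => shifted_hypot_sqr_contract tau c u mu Htau hu mu_ge.
apply: (variance_lt_of_sqdev P (shifted_hypot tau c mu) fX2 gX2 EgX).
- by apply: filterS HX => x /contract[].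
- move=> eq_dev; apply: Hnc; exists mu.
  by apply: filterS2 HX eq_dev => x /contract[_]; exact.
Qed.
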